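(* Let $\mathcal{D}$ be an observational ODE (clamped set $\emptyset$), $I\subseteq\mathcal{I}$ and $\boldsymbol{\xi}_I\in\mathcal{R}_I$. Suppose both $\mathcal{D}$ and $\mathcal{D}_{\mathrm{do}(\mathbf{X}_I=\boldsymbol{\xi}_I)}$ are structurally stable, and let $\mathcal{M}_{\mathcal{E}_{\mathcal{D}}}$ and $\mathcal{M}_{\mathcal{E}_{\mathcal{D}_{\mathrm{do}(\mathbf{X}_I=\boldsymbol{\xi}_I)}}}$ be induced SCMs of the induced LEEs $\mathcal{E}_{\mathcal{D}}$ and $\mathcal{E}_{\mathcal{D}_{\mathrm{do}(\mathbf{X}_I=\boldsymbol{\xi}_I)}}$ (constructed as in the context, using the sets $I_i$ witnessing structural stability). Then: (i) The following square commutes: $(\mathcal{E}_{\mathcal{D}})_{\mathrm{do}(\mathbf{X}_I=\boldsymbol{\xi}_I)}=\mathcal{E}_{\mathcal{D}_{\mathrm{do}(\mathbf{X}_I=\boldsymbol{\xi}_I)}}$ and $(\mathcal{M}_{\mathcal{E}_{\mathcal{D}}})_{\mathrm{do}(\mathbf{X}_I=\boldsymbol{\xi}_I)}=\mathcal{M}_{\mathcal{E}_{\mathcal{D}_{\mathrm{do}(\mathbf{X}_I=\boldsymbol{\xi}_I)}}}$. (ii) If moreover $\mathcal{D}$ is stable with respect to $\{I\}$, then the SCM $\mathcal{M}_{\mathcal{E}_{\mathcal{D}_{\mathrm{do}(\mathbf{X}_I=\boldsymbol{\xi}_I)}}}$ has a unique solution, and it coincides with the stable equilibrium $\mathbf{X}^*_{\mathrm{do}(\mathbf{X}_I=\boldsymbol{\xi}_I)}$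 of the intervened ODE $\mathcal{D}_{\mathrm{do}(\mathbf{X}_I=\boldsymbol{\xi}_I)}$.
   Context: Let $\mathcal{I}=\{1,\dots,D\}$ and for each $i$ let $\mathcal{R}_i\subseteq\mathbb{R}^{d_i}$; for $A\subseteq\mathcal{I}$ write $\mathcal{R}_A=\prod_{i\in A}\mathcal{R}_i$ and $\mathbf{X}_A=(X_i)_{i\in A}$. ODE. An ODE $\mathcal{D}$ consists of: for each $i\in\mathcal{I}$ a parent set $\mathrm{pa}_{\mathcal{D}}(i)\subseteq\mathcal{I}$ (possibly containing $i$) and a locally Lipschitz continuous function $f_i:\mathcal{R}_{\mathrm{pa}_{\mathcal{D}}(i)}\to\mathcal{R}_i$ that depends nontrivially on each of its arguments; together with a set $C\subseteq\mathcal{I}$ of clamped indices and clamp values $\mathbf{c}_C\in\mathcal{R}_C$, such that for $i\in C$ we have $\mathrm{pa}_{\mathcal{D}}(i)=\emptyset$ and $f_i\equiv 0$. Its dynamics is $\dot X_i(t)=f_i(\mathbf{X}_{\mathrm{pa}_{\mathcal{D}}(i)}(t))$ for all $i$, with admissible initial states $\mathbf{X}(0)=\mathbf{X}_0\in\mathcal{R}_{\mathcal{I}}$ satisfying $(\mathbf{X}_0)_C=\mathbf{c}_C$. (The observational ODE has $C=\emptyset$.) Perfect intervention on an ODE. For $I\subseteq\mathcal{I}$ and $\boldsymbol{\xi}_I\in\mathcal{R}_I$, the intervened ODE $\mathcal{D}_{\mathrm{do}(\mathbf{X}_I=\boldsymbol{\xi}_I)}$ is obtained by setting, for each $i\in I$,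 $\mathrm{pa}(i):=\emptyset$ and $f_i:\equiv0$, and replacing the clamped set by $C\cup I$ with clamp values $\xi_i$ for $i\in I$ and $c_i$ for $i\in C\setminus I$; all other $f_j$ and parent sets are unchanged. Stability. For $\mathcal{J}\subseteq\mathcal{P}(\mathcal{I})$, $\mathcal{D}$ is stable with respect to $\mathcal{J}$ if for every $I\in\mathcal{J}$ and every $\boldsymbol{\xi}_I\in\mathcal{R}_I$ there exists a unique $\mathbf{X}^*_{\mathrm{do}(\mathbf{X}_I=\boldsymbol{\xi}_I)}\in\mathcal{R}_{\mathcal{I}}$ such that for every admissible initial state of $\mathcal{D}_{\mathrm{do}(\mathbf{X}_I=\boldsymbol{\xi}_I)}$ the solution exists for all $t\ge0$ and satisfies $\lim_{t\to\infty}\mathbf{X}(t)=\mathbf{X}^*_{\mathrm{do}(\mathbf{X}_I=\boldsymbol{\xi}_I)}$. $\mathcal{D}$ is structurally stable if for each $i\in\mathcal{I}$ there is $I_i$ with $\mathrm{pa}_{\mathcal{D}}(i)\setminus\{i\}\subseteq I_i\subseteq\mathcal{I}\setminus\{i\}$ such that $\mathcal{D}$ is stable with respect to $\{I_i\}$. LEE. A system of labeled equilibrium equations (LEE) $\mathcal{E}$ consists of, for each label $i\in\mathcal{I}$, a parent set $\mathrm{pa}_{\mathcal{E}}(i)\subseteq\mathcal{I}$ and a function $g_i:\mathcal{R}_{\mathrm{pa}_{\mathcal{E}}(i)}\to\mathcal{R}_i$, giving the labeled equation $\mathcal{E}_i:\ 0=g_i(\mathbf{X}_{\mathrm{pa}_{\mathcal{E}}(i)})$.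 Two LEEs are equal if they have the same parent sets and functions for every label. A solution is $\mathbf{X}\in\mathcal{R}_{\mathcal{I}}$ satisfying all equations; $\mathcal{E}$ is solvable if it has exactly one solution, and solvable with respect to $\mathcal{J}\subseteq\mathcal{P}(\mathcal{I})$ if $\mathcal{E}_{\mathrm{do}(\mathbf{X}_I=\boldsymbol{\xi}_I)}$ is solvable for all $I\in\mathcal{J}$, $\boldsymbol{\xi}_I\in\mathcal{R}_I$. The intervened LEE $\mathcal{E}_{\mathrm{do}(\mathbf{X}_I=\boldsymbol{\xi}_I)}$ replaces, for each $i\in I$, $\mathcal{E}_i$ by $0=X_i-\xi_i$ (parent set $\{i\}$), leaving the others unchanged. Induced LEE. The LEE $\mathcal{E}_{\mathcal{D}}$ induced by an ODE $\mathcal{D}$ with clamped set $C$ and values $\mathbf{c}_C$ has, for $i\notin C$, the labeled equation $0=f_i(\mathbf{X}_{\mathrm{pa}_{\mathcal{D}}(i)})$ with parent set $\mathrm{pa}_{\mathcal{D}}(i)$, and for $i\in C$ the labeled equation $0=X_i-c_i$ with parent set $\{i\}$. Deterministic SCM. An SCM $\mathcal{M}$ consists of, for each $i$, a parent set $\mathrm{pa}_{\mathcal{M}}(i)\subseteq\mathcal{I}\setminus\{i\}$ and a function $h_i:\mathcal{R}_{\mathrm{pa}_{\mathcal{M}}(i)}\to\mathcal{R}_i$, giving the structural equation $X_i=h_i(\mathbf{X}_{\mathrm{pa}_{\mathcal{M}}(i)})$. Two SCMs are equal if they have the same parent sets and functions. $\mathcal{M}_{\mathrm{do}(\mathbf{X}_I=\boldsymbol{\xi}_I)}$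 replaces, for each $i\in I$, the structural equation by $X_i=\xi_i$ (empty parent set). $\mathcal{M}$ is solvable if its structural equations have exactly one simultaneous solution. Induced SCM. For an LEE $\mathcal{E}$ and sets $I_i$ with $\mathrm{pa}_{\mathcal{E}}(i)\setminus\{i\}\subseteq I_i\subseteq\mathcal{I}\setminus\{i\}$ such that $\mathcal{E}$ is solvable with respect to $\{I_i\}$ (for the induced LEE of a structurally stable ODE one uses the sets $I_i$ witnessing structural stability), the induced SCM $\mathcal{M}_{\mathcal{E}}$ has $\mathrm{pa}_{\mathcal{M}_{\mathcal{E}}}(i):=\mathrm{pa}_{\mathcal{E}}(i)\setminus\{i\}$ and $h_i(\boldsymbol{\xi}_{\mathrm{pa}_{\mathcal{M}_{\mathcal{E}}}(i)}):=\big(\mathbf{X}^*_{\mathrm{do}(\mathbf{X}_{I_i}=\boldsymbol{\xi}_{I_i})}\big)_i$, the $i$-th component of the unique solution of $\mathcal{E}_{\mathrm{do}(\mathbf{X}_{I_i}=\boldsymbol{\xi}_{I_i})}$, where $\boldsymbol{\xi}_{I_i}$ is any extension of $\boldsymbol{\xi}_{\mathrm{pa}_{\mathcal{M}_{\mathcal{E}}}(i)}$ to $I_i$ (the construction presupposes that this component depends only on $\boldsymbol{\xi}_{\mathrm{pa}_{\mathcal{M}_{\mathcal{E}}}(i)}$). *)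

From Stdlib Require Import Reals Bool.
From Stdlib Require Vectors.Fin.
Open Scope R_scope.

Definition Vec (n : nat) := Fin.t n -> R.
Definition vzero {n} : Vec n := fun _ => 0.
Definition vsub {n} (x y : Vec n) : Vec n := fun k => x k - y k.

Section Defs.
(* D = number of variables, d i = dimension of X_i, Rs i = the set R_i ⊆ R^{d_i}. *)
Variable D : nat.
Variable d : Fin.t D -> nat.

Definition State := forall i : Fin.t D, Vec (d i).
Definition IdxSet := Fin.t D -> bool.
Definition emptyset : IdxSet := fun _ => false.
Definition singleton (i : Fin.t D) : IdxSet :=
  fun j => if Fin.eq_dec i j then true else false.
Definition remove (P : IdxSet) (i : Fin.t D) : IdxSet :=
  fun j => P j && negb (singleton i j).

(* ODE: parent sets pa(i) (j ∈ pa(i) iff ode_pa i j = true), functions f_i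
   (encoded on full states, required to depend only on the parents),
   clamped set C and clamp values c (only the values on C matter). *)
Record ODE := mkODE {
  ode_pa : Fin.t D -> IdxSet;
  ode_f : forall i : Fin.t D, State -> Vec (d i);
  ode_C : IdxSet;
  ode_c : State }.

Record LEE := mkLEE {
  lee_pa : Fin.t D -> IdxSet;
  lee_g : forall i : Fin.t D, State -> Vec (d i) }.

Record SCM := mkSCM {
  scm_pa : Fin.t D -> IdxSet;
  scm_h : forall i : Fin.t D, State -> Vec (d i) }.

Variable Rs : forall i : Fin.t D, Vec (d i) -> Prop.

Definition InR (X : State) : Prop := forall i, Rs i (X i).
Definition InR_on (I : IdxSet) (X : State) : Prop := forall i, I i = true -> Rs i (X i).

(* g : R_P -> R^n, encoded on full states: depends only on the P-components. *)
Definition depends_only (P : IdxSet) {n} (g : State -> Vec n) : Prop :=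
  forall x y, InR x -> InR y -> (forall j, P j = true -> x j = y j) -> g x = g y.

Definition depends_nontrivially (P : IdxSet) {n} (g : State -> Vec n) : Prop :=
  forall j, P j = true ->
    exists x y, InR x /\ InR y /\ (forall l, l <> j -> x l = y l) /\ g x <> g y.

Definition near (delta : R) (x y : State) : Prop :=
  forall j k, Rabs (y j k - x j k) < delta.

Definition loc_lipschitz {n} (g : State -> Vec n) : Prop :=
  forall x, InR x -> exists delta L, delta > 0 /\ L >= 0 /\
    forall y z, InR y -> InR z -> near delta x y -> near delta x z ->
      forall e, 0 <= e -> (forall j k, Rabs (y j k - z j k) <= e) ->
        forall k, Rabs (g y k - g z k) <= L * e.

Definition is_ODE (O : ODE) : Prop :=
  (forall i, depends_only (ode_pa O i) (ode_f O i) /\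
             depends_nontrivially (ode_pa O i) (ode_f O i) /\
             loc_lipschitz (ode_f O i)) /\
  (forall i, ode_C O i = true ->
     (forall j, ode_pa O i j = false) /\
     (forall x, InR x -> ode_f O i x = vzero)) /\
  InR_on (ode_C O) (ode_c O).

Definition observational (O : ODE) : Prop := forall i, ode_C O i = false.

(* Perfect intervention do(X_I = xi_I) on an ODE (only xi on I matters). *)
Definition ode_do (O : ODE) (I : IdxSet) (xi : State) : ODE :=
  mkODE (fun i => if I i then emptyset else ode_pa O i)
        (fun i x => if I i then vzero else ode_f O i x)
        (fun j => I j || ode_C O j)
        (fun j => if I j then xi j else ode_c O j).

Definition admissible (O : ODE) (X0 : State) : Prop :=
  InR X0 /\ forall i, ode_C O i = true -> X0 i = ode_c O i.

Definition ode_solution (O : ODE) (X0 : State) (X : R -> State) : Prop :=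
  X 0 = X0 /\
  (forall t, 0 <= t -> InR (X t)) /\
  (forall t, 0 < t -> forall i k,
      derivable_pt_lim (fun s => X s i k) t (ode_f O i (X t) k)) /\
  (forall i k eps, eps > 0 -> exists delta, delta > 0 /\
      forall t, 0 <= t < delta -> Rabs (X t i k - X0 i k) < eps).

Definition converges (X : R -> State) (Xs : State) : Prop :=
  forall eps, eps > 0 -> exists T, forall t, t >= T ->
    forall i k, Rabs (X t i k - Xs i k) < eps.

Definition attracts (O : ODE) (Xs : State) : Prop :=
  forall X0, admissible O X0 ->
    (exists X, ode_solution O X0 X) /\
    (forall X, ode_solution O X0 X -> converges X Xs).

(* Stability w.r.t. the singleton family {I}. *)
Definition stable_wrt (O : ODE) (I : IdxSet) : Prop :=
  forall xi, InR_on I xi -> exists! Xs, InR Xs /\ attracts (ode_do O I xi) Xs.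

Definition struct_stable_witness (O : ODE) (Ii : Fin.t D -> IdxSet) : Prop :=
  forall i, (forall j, ode_pa O i j = true -> j <> i -> Ii i j = true) /\
            Ii i i = false /\ stable_wrt O (Ii i).

Definition struct_stable (O : ODE) : Prop := exists Ii, struct_stable_witness O Ii.

Definition lee_solution (E : LEE) (X : State) : Prop :=
  InR X /\ forall i, lee_g E i X = vzero.
Definition lee_solvable (E : LEE) : Prop := exists! X, lee_solution E X.
Definition lee_do (E : LEE) (I : IdxSet) (xi : State) : LEE :=
  mkLEE (fun i => if I i then singleton i else lee_pa E i)
        (fun i X => if I i then vsub (X i) (xi i) else lee_g E i X).
Definition lee_solvable_wrt (E : LEE) (I : IdxSet) : Prop :=
  forall xi, InR_on I xi -> lee_solvable (lee_do E I xi).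
Definition lee_eq (E1 E2 : LEE) : Prop :=
  forall i, (forall j, lee_pa E1 i j = lee_pa E2 i j) /\
            (forall X, InR X -> lee_g E1 i X = lee_g E2 i X).

Definition lee_of_ode (O : ODE) : LEE :=
  mkLEE (fun i => if ode_C O i then singleton i else ode_pa O i)
        (fun i X => if ode_C O i then vsub (X i) (ode_c O i) else ode_f O i X).

Definition scm_solution (M : SCM) (X : State) : Prop :=
  InR X /\ forall i, X i = scm_h M i X.
Definition scm_do (M : SCM) (I : IdxSet) (xi : State) : SCM :=
  mkSCM (fun i => if I i then emptyset else scm_pa M i)
        (fun i X => if I i then xi i else scm_h M i X).
Definition scm_eq (M1 M2 : SCM) : Prop :=
  forall i, (forall j, scm_pa M1 i j = scm_pa M2 i j) /\
            (forall X, InR X -> scm_h M1 i X = scm_h M2 i X).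

Definition induced_SCM (E : LEE) (Ii : Fin.t D -> IdxSet) (M : SCM) : Prop :=
  (forall i, (forall j, lee_pa E i j = true -> j <> i -> Ii i j = true) /\
             Ii i i = false /\ lee_solvable_wrt E (Ii i)) /\
  (forall i j, scm_pa M i j = remove (lee_pa E i) i j) /\
  (forall i, depends_only (scm_pa M i) (scm_h M i)) /\
  (forall i xi X, InR xi -> lee_solution (lee_do E (Ii i) xi) X ->
                  scm_h M i xi = X i).

End Defs.

Arguments mkODE {D d}. Arguments ode_pa {D d}. Arguments ode_f {D d}.
Arguments ode_C {D d}. Arguments ode_c {D d}.
Arguments mkLEE {D d}. Arguments lee_pa {D d}. Arguments lee_g {D d}.
Arguments mkSCM {D d}. Arguments scm_pa {D d}. Arguments scm_h {D d}.
Arguments State {D}. Arguments emptyset {D}. Arguments singleton {D}. Arguments remove {D}.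
Arguments InR {D d}. Arguments InR_on {D d}. Arguments depends_only {D d}.
Arguments depends_nontrivially {D d}. Arguments near {D d}. Arguments loc_lipschitz {D d}.
Arguments is_ODE {D d}. Arguments observational {D d}. Arguments ode_do {D d}.
Arguments admissible {D d}. Arguments ode_solution {D d}. Arguments converges {D d}.
Arguments attracts {D d}. Arguments stable_wrt {D d}. Arguments struct_stable_witness {D d}.
Arguments struct_stable {D d}. Arguments lee_solution {D d}. Arguments lee_solvable {D d}.
Arguments lee_do {D d}. Arguments lee_solvable_wrt {D d}. Arguments lee_eq {D d}.
Arguments lee_of_ode {D d}. Arguments scm_solution {D d}. Arguments scm_do {D d}.
Arguments scm_eq {D d}. Arguments induced_SCM {D d}.

From Stdlib Require Import Reals Lra Bool.
From Stdlib Require Vectors.Fin.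
From Stdlib Require Import FunctionalExtensionality Classical.
From Coquelicot Require Coquelicot.
Open Scope R_scope.

(* Part (i) is bookkeeping: for an observational ODE, intervening on the
   induced LEE and inducing the LEE of the intervened ODE give the same
   labelled equations, and the solutions of doubly intervened LEEs are the
   equilibria of the ODE clamped on the union of the intervened sets
   ("clamped equilibria").  The only analytic input is a uniqueness fact:
   under stability of D w.r.t. a set K containing the parents of i but not i,
   the i-th coordinate of a clamped equilibrium is determined by its parents.
   Indeed, starting the clamped ODE at the equilibrium with coordinate i
   changed to another zero W_i of f_i, coordinate i never moves (a Gronwall-
   type uniqueness argument for the locally Lipschitz f_i), so the attractor,
   which is the equilibrium itself, has i-th coordinate W_i.

   Part (ii) follows from two facts about the stable equilibrium of an
   intervened ODE: every clamped equilibrium equals it (constant solutions),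
   and it is itself a clamped equilibrium (clamped coordinates never move, and
   a convergent solution of an ODE with continuous vector field converges to a
   zero of the field). *)

Lemma Req_of_close a b : (forall eps, eps > 0 -> Rabs (a - b) < eps) -> a = b.
Proof.
  intro Hclose. destruct (Req_dec a b) as [E|Hne]; [exact E|].
  assert (Hpos : Rabs (a - b) > 0) by (apply Rabs_pos_lt; lra).
  specialize (Hclose _ Hpos). lra.
Qed.

Lemma continuity_of_derivative g t l : derivable_pt_lim g t l -> continuity_pt g t.
Proof. intro H. apply derivable_continuous_pt. exists l. exact H. Qed.

Lemma continuity_eps f x eps : continuity_pt f x -> eps > 0 ->
  exists alp, alp > 0 /\ forall y, Rabs (y - x) < alp -> Rabs (f y - f x) < eps.
Proof.
  intros Hc He. destruct (Hc eps He) as [alp [Ha H]].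
  exists alp. split; [exact Ha|]. intros y Hy.
  destruct (Req_dec x y) as [<-|Hne].
  - rewrite Rminus_diag, Rabs_R0. lra.
  - apply (H y). split; [split; [exact I| exact Hne]| exact Hy].
Qed.

Lemma continuous_left_constant (g : R -> R) m c : continuity_pt g m -> 0 < m ->
  (forall s, 0 <= s < m -> g s = c) -> g m = c.
Proof.
  intros Hc Hm Hbefore. apply Req_of_close. intros eps He.
  destruct (continuity_eps g m eps Hc He) as [alp [Ha Hal]].
  set (s := Rmax 0 (m - alp / 2)).
  assert (Hs1 : 0 <= s) by apply Rmax_l.
  assert (Hs2 : m - alp / 2 <= s) by apply Rmax_r.
  assert (Hs3 : s < m) by (apply Rmax_lub_lt; lra).
  rewrite <- (Hbefore s) by lra. rewrite Rabs_minus_sym.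
  apply Hal. rewrite Rabs_left; lra.
Qed.

Lemma right_continuity_of_derivative (g dg : R -> R) :
  (forall t, 0 < t -> derivable_pt_lim g t (dg t)) ->
  (forall eps, eps > 0 -> exists eta, eta > 0 /\
     forall s, 0 <= s < eta -> Rabs (g s - g 0) < eps) ->
  forall T eps, 0 <= T -> eps > 0 -> exists eta, eta > 0 /\
    forall s, T <= s < T + eta -> Rabs (g s - g T) < eps.
Proof.
  intros Hd H0 T eps HT He.
  destruct (Req_dec T 0) as [->|HT0].
  - destruct (H0 eps He) as [eta [Heta H]].
    exists eta. split; [exact Heta|]. intros s Hs. apply H. lra.
  - assert (Hc : continuity_pt g T) by (apply continuity_of_derivative with (dg T), Hd; lra).
    destruct (continuity_eps g T eps Hc He) as [eta [Heta H]].
    exists eta. split; [exact Heta|]. intros s Hs. apply H. rewrite Rabs_right; lra.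
Qed.

Lemma mean_value_ineq (g dg : R -> R) a b M :
  a <= b -> (forall t, a < t <= b -> derivable_pt_lim g t (dg t)) ->
  (forall eps, eps > 0 -> exists delta, delta > 0 /\
       forall t, a <= t < a + delta -> Rabs (g t - g a) < eps) ->
  (forall t, a < t <= b -> Rabs (dg t) <= M) ->
  Rabs (g b - g a) <= M * (b - a).
Proof.
  intros Hab Hd Hc Hb.
  destruct (Req_dec a b) as [<-|Hne].
  { rewrite !Rminus_diag, Rabs_R0. lra. }
  assert (HM : 0 <= M) by (apply Rle_trans with (Rabs (dg b)); [apply Rabs_pos| apply Hb; lra]).
  (* the classical mean value theorem on every [a', b] with a < a' *)
  assert (Hinner : forall a', a < a' <= b -> Rabs (g b - g a') <= M * (b - a')).
  { intros a' Ha'.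
    destruct (Coquelicot.Derive.MVT_gen g a' b dg) as [c [Hc1 Hc2]].
    - intros x Hx. rewrite Rmin_left, Rmax_right in Hx by lra.
      apply Coquelicot.Derive.is_derive_Reals, Hd. lra.
    - intros x Hx. rewrite Rmin_left, Rmax_right in Hx by lra.
      apply continuity_of_derivative with (dg x), Hd. lra.
    - rewrite Rmin_left, Rmax_right in Hc1 by lra.
      rewrite Hc2, Rabs_mult, (Rabs_right (b - a')) by lra.
      apply Rmult_le_compat_r; [lra| apply Hb; lra]. }
  apply Rle_plus_epsilon. intros eps He.
  destruct (Hc eps He) as [delta [Hdl Hdc]].
  set (a' := a + Rmin (delta / 2) (b - a)).
  assert (Ha'1 : a < a') by (unfold a'; generalize (Rmin_pos (delta / 2) (b - a)); lra).
  assert (Ha'2 : a' <= b) by (unfold a'; generalize (Rmin_r (delta / 2) (b - a)); lra).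
  assert (Ha'3 : a' < a + delta) by (unfold a'; generalize (Rmin_l (delta / 2) (b - a)); lra).
  assert (Htri : Rabs (g b - g a) <= Rabs (g b - g a') + Rabs (g a' - g a)).
  { replace (g b - g a) with ((g b - g a') + (g a' - g a)) by ring. apply Rabs_triang. }
  specialize (Hinner a' (conj Ha'1 Ha'2)).
  specialize (Hdc a' (conj (Rlt_le _ _ Ha'1) Ha'3)).
  assert (M * (b - a') <= M * (b - a)) by (apply Rmult_le_compat_l; lra).
  lra.
Qed.

Lemma derivative_limit_zero (g dg : R -> R) l c :
  (forall t, 0 < t -> derivable_pt_lim g t (dg t)) ->
  (forall eps, eps > 0 -> exists T, forall t, t >= T -> Rabs (g t - l) < eps) ->
  (forall eps, eps > 0 -> exists T, forall t, t >= T -> Rabs (dg t - c) < eps) ->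
  c = 0.
Proof.
  intros Hd Hg Hdg. destruct (Req_dec c 0) as [E|Hc]; [exact E|]. exfalso.
  assert (Hac : Rabs c > 0) by (apply Rabs_pos_lt; exact Hc).
  destruct (Hg 1 Rlt_0_1) as [T1 HT1].
  destruct (Hdg (Rabs c / 2) ltac:(lra)) as [T2 HT2].
  set (t1 := Rmax 1 (Rmax T1 T2)). set (t2 := t1 + 4 / Rabs c).
  assert (Ht1 : 1 <= t1 /\ T1 <= t1 /\ T2 <= t1).
  { unfold t1. generalize (Rmax_l 1 (Rmax T1 T2)) (Rmax_r 1 (Rmax T1 T2))
      (Rmax_l T1 T2) (Rmax_r T1 T2). lra. }
  assert (Hq : 4 / Rabs c > 0) by (apply Rdiv_lt_0_compat; lra).
  assert (Ht2 : t1 < t2) by (unfold t2; lra).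
  destruct (Coquelicot.Derive.MVT_gen g t1 t2 dg) as [c' [Hc1 Hc2]].
  - intros x Hx. rewrite Rmin_left, Rmax_right in Hx by lra.
    apply Coquelicot.Derive.is_derive_Reals, Hd. lra.
  - intros x Hx. rewrite Rmin_left, Rmax_right in Hx by lra.
    apply continuity_of_derivative with (dg x), Hd. lra.
  - rewrite Rmin_left, Rmax_right in Hc1 by lra.
    (* the slope at c' is at least |c|/2, so g moves by more than 2 ... *)
    assert (Hslope : Rabs (dg c') > Rabs c / 2).
    { assert (Hnear : Rabs (c - dg c') < Rabs c / 2)
        by (rewrite Rabs_minus_sym; apply HT2; lra).
      generalize (Rabs_triang_inv c (c - dg c')).
      replace (c - (c - dg c')) with (dg c') by ring. lra. }
    assert (Hmove : Rabs (g t2 - g t1) > 2).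
    { rewrite Hc2, Rabs_mult, (Rabs_right (t2 - t1)) by lra.
      replace (t2 - t1) with (4 / Rabs c) by (unfold t2; ring).
      apply Rle_lt_trans with (Rabs c / 2 * (4 / Rabs c)).
      - right. field. lra.
      - apply Rmult_lt_compat_r; lra. }
    (* ... while it stays within 1 of its limit *)
    assert (Rabs (g t1 - l) < 1) by (apply HT1; lra).
    assert (Rabs (g t2 - l) < 1) by (apply HT1; lra).
    assert (Rabs (g t2 - g t1) <= Rabs (g t2 - l) + Rabs (l - g t1)).
    { replace (g t2 - g t1) with ((g t2 - l) + (l - g t1)) by ring. apply Rabs_triang. }
    rewrite (Rabs_minus_sym l) in *. lra.
Qed.

Lemma geometric_squeeze a c q : 0 <= q < 1 -> (forall N, Rabs a <= c * q ^ N) -> a = 0.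
Proof.
  intros Hq Hb. destruct (Req_dec a 0) as [E|Ha]; [exact E|]. exfalso.
  assert (Hpos : Rabs a > 0) by (apply Rabs_pos_lt; exact Ha).
  assert (Hc : c > 0) by (specialize (Hb 0%nat); simpl in Hb; lra).
  destruct (pow_lt_1_zero q ltac:(rewrite Rabs_right; lra) (Rabs a / c)
              ltac:(apply Rdiv_lt_0_compat; lra)) as [N HN].
  specialize (HN N (le_n N)). rewrite Rabs_right in HN by (apply Rle_ge, pow_le; lra).
  specialize (Hb N).
  assert (c * q ^ N < c * (Rabs a / c)) by (apply Rmult_lt_compat_l; lra).
  replace (c * (Rabs a / c)) with (Rabs a) in H by (field; lra). lra.
Qed.

Lemma finite_min_radius n (P : Fin.t n -> R -> Prop) :
  (forall k r1 r2, 0 < r2 <= r1 -> P k r1 -> P k r2) ->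
  (forall k, exists r, r > 0 /\ P k r) -> exists r, r > 0 /\ forall k, P k r.
Proof.
  induction n as [|n IH]; intros Hmono Hex.
  - exists 1. split; [lra|]. intro k. apply (Fin.case0 (fun k => P k 1) k).
  - destruct (IH (fun k => P (Fin.FS k))) as [r1 [Hr1 H1]].
    + intros k a b Hab Hk. exact (Hmono _ a b Hab Hk).
    + intro k. exact (Hex (Fin.FS k)).
    + destruct (Hex Fin.F1) as [r0 [Hr0 H0]].
      assert (Hmin : 0 < Rmin r0 r1) by (apply Rmin_pos; lra).
      exists (Rmin r0 r1). split; [exact Hmin|].
      intro k. apply (Fin.caseS' k).
      * apply Hmono with r0; [split; [exact Hmin| apply Rmin_l]| exact H0].
      * intro k'. apply Hmono with r1; [split; [exact Hmin| apply Rmin_r]| exact (H1 k')].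
Qed.

Lemma real_induction (P : R -> Prop) :
  P 0 ->
  (forall T, 0 <= T -> (forall s, 0 <= s <= T -> P s) ->
     exists h, h > 0 /\ forall s, T <= s <= T + h -> P s) ->
  (forall m, 0 < m -> (forall s, 0 <= s < m -> P s) -> P m) ->
  forall t, 0 <= t -> P t.
Proof.
  intros H0 Hext Hclosed t Ht.
  destruct (classic (P t)) as [Hp|Hnot]; [exact Hp|]. exfalso.
  pose (E := fun T => 0 <= T /\ forall s, 0 <= s <= T -> P s).
  assert (HE0 : E 0).
  { split; [lra|]. intros s Hs. replace s with 0 by lra. exact H0. }
  assert (Hbd : bound E).
  { exists t. intros T [HT HTs]. destruct (Rle_or_lt T t) as [Hle|Hlt]; [exact Hle|].
    exfalso. apply Hnot, HTs. lra. }
  destruct (completeness E Hbd (ex_intro _ 0 HE0)) as [m [Hub Hleast]].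
  assert (Hm0 : 0 <= m) by (apply Hub; exact HE0).
  assert (Hbelow : forall s, 0 <= s < m -> P s).
  { intros s Hs.
    destruct (classic (exists T, E T /\ s <= T)) as [[T [[_ HT] HsT]]|Hno].
    - apply HT. lra.
    - exfalso. assert (Hsub : is_upper_bound E s).
      { intros x Hx. destruct (Rle_or_lt x s) as [Hle|Hgt]; [exact Hle|].
        exfalso. apply Hno. exists x. split; [exact Hx| lra]. }
      specialize (Hleast s Hsub). lra. }
  assert (HEm : forall s, 0 <= s <= m -> P s).
  { intros s Hs. destruct (Rle_lt_or_eq_dec s m) as [Hsm|Hsm]; [lra| apply Hbelow; lra|].
    subst s. destruct (Req_dec m 0) as [->|Hnz]; [exact H0|].
    apply Hclosed; [lra| exact Hbelow]. }
  destruct (Hext m Hm0 HEm) as [h [Hh Hh']].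
  assert (HEmh : E (m + h)).
  { split; [lra|]. intros s Hs. destruct (Rle_or_lt s m); [apply HEm| apply Hh']; lra. }
  specialize (Hub _ HEmh). lra.
Qed.

Lemma vec_ext {n} (x y : Vec n) : (forall k, x k = y k) -> x = y.
Proof. intro H. apply functional_extensionality. exact H. Qed.

Section StaysAtStart.
Variables (n : nat) (x dx : R -> Vec n) (x0 : Vec n) (delta L : R).
Hypothesis x_start : x 0 = x0.
Hypothesis delta_pos : delta > 0.
Hypothesis L_nonneg : 0 <= L.
Hypothesis x_deriv :
  forall s, 0 < s -> forall k, derivable_pt_lim (fun r => x r k) s (dx s k).
Hypothesis x_right_cont_0 : forall k eps, eps > 0 -> exists eta, eta > 0 /\
  forall s, 0 <= s < eta -> Rabs (x s k - x0 k) < eps.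
Hypothesis dx_bound : forall s e, 0 < s -> 0 <= e ->
  (forall k, Rabs (x s k - x0 k) < delta) ->
  (forall k, Rabs (x s k - x0 k) <= e) -> forall k, Rabs (dx s k) <= L * e.

Lemma x_right_cont T k eps : 0 <= T -> eps > 0 -> exists eta, eta > 0 /\
  forall s, T <= s < T + eta -> Rabs (x s k - x T k) < eps.
Proof.
  apply (right_continuity_of_derivative (fun r => x r k) (fun r => dx r k)).
  - intros t Ht. apply x_deriv. exact Ht.
  - rewrite x_start. apply x_right_cont_0.
Qed.

(* If x = x0 on [0, T], then also on [T, T + h] for some h > 0: on a short
   interval the deviation is at most delta (L h)^N for every N. *)
Lemma stays_local_extension T : 0 <= T -> (forall s, 0 <= s <= T -> x s = x0) ->
  exists h, h > 0 /\ forall s, T <= s <= T + h -> x s = x0.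
Proof.
  intros HT Hbefore.
  assert (xT : x T = x0) by (apply Hbefore; lra).
  destruct (finite_min_radius n (fun k eta => forall s, T <= s < T + eta ->
                 Rabs (x s k - x0 k) < delta)) as [eta [Heta Hclose]].
  { intros k r1 r2 Hr Hk s Hs. apply Hk. lra. }
  { intro k. rewrite <- xT. exact (x_right_cont T k delta HT delta_pos). }
  set (h := Rmin (eta / 2) (1 / (2 * (L + 1)))).
  assert (Hh1 : h <= eta / 2) by apply Rmin_l.
  assert (Hh2 : h <= 1 / (2 * (L + 1))) by apply Rmin_r.
  assert (Hh0 : h > 0) by (apply Rmin_pos; [lra| apply Rdiv_lt_0_compat; lra]).
  assert (HLh : 0 <= L * h < 1).
  { split; [apply Rmult_le_pos; lra|].
    apply Rle_lt_trans with (L * (1 / (2 * (L + 1)))); [apply Rmult_le_compat_l; lra|].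
    replace (L * (1 / (2 * (L + 1)))) with (1 / 2 - 1 / (2 * (L + 1))) by (field; lra).
    assert (0 < 1 / (2 * (L + 1))) by (apply Rdiv_lt_0_compat; lra). lra. }
  assert (Hbound : forall N s, T <= s <= T + h -> forall k,
             Rabs (x s k - x0 k) <= delta * (L * h) ^ N).
  { induction N as [|N IH]; intros s Hs k.
    - rewrite pow_O, Rmult_1_r. left. apply Hclose. lra.
    - assert (HP : 0 <= delta * (L * h) ^ N) by (apply Rmult_le_pos; [lra| apply pow_le; lra]).
      assert (Hmvi : Rabs (x s k - x T k) <= L * (delta * (L * h) ^ N) * (s - T)).
      { apply (mean_value_ineq (fun r => x r k) (fun r => dx r k)); [lra| | |].
        - intros r Hr. apply x_deriv. lra.
        - intros eps He. exact (x_right_cont T k eps HT He).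
        - intros r Hr. apply dx_bound; [lra| exact HP| |].
          + intro k'. apply Hclose. lra.
          + intro k'. apply IH. lra. }
      rewrite xT in Hmvi. apply Rle_trans with (1 := Hmvi).
      replace (delta * (L * h) ^ S N) with (L * (delta * (L * h) ^ N) * h) by (simpl; ring).
      apply Rmult_le_compat_l; [apply Rmult_le_pos; lra| lra]. }
  exists h. split; [exact Hh0|]. intros s Hs. apply vec_ext. intro k.
  assert (Hzero : x s k - x0 k = 0)
    by exact (geometric_squeeze _ delta (L * h) HLh (fun N => Hbound N s Hs k)).
  lra.
Qed.

Lemma stays_at_start : forall t, 0 <= t -> x t = x0.
Proof.
  apply real_induction; [exact x_start| exact stays_local_extension|].
  intros m Hm Hbefore. apply vec_ext. intro k.
  apply (continuous_left_constant (fun r => x r k)); [| exact Hm|].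
  - apply continuity_of_derivative with (dx m k), x_deriv. exact Hm.
  - intros s Hs. rewrite (Hbefore s Hs). reflexivity.
Qed.

End StaysAtStart.

Section InterventionTheory.
Context {D : nat} {d : Fin.t D -> nat} {Rs : forall i : Fin.t D, Vec (d i) -> Prop}.

Lemma singleton_self (i : Fin.t D) : singleton i i = true.
Proof. unfold singleton. destruct (Fin.eq_dec i i); congruence. Qed.

Lemma singleton_other (i j : Fin.t D) : i <> j -> singleton i j = false.
Proof. intro H. unfold singleton. destruct (Fin.eq_dec i j); congruence. Qed.

Lemma vsub_diag {n} (a : Vec n) : vsub a a = vzero.
Proof. apply vec_ext. intro k. apply Rminus_diag. Qed.

Lemma vsub_zero {n} (a b : Vec n) : vsub a b = vzero -> a = b.
Proof.
  intro H. apply vec_ext. intro k.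
  assert (Hk : vsub a b k = vzero k) by (rewrite H; reflexivity).
  unfold vsub, vzero in Hk. lra.
Qed.

Definition override (J : IdxSet D) (c y : State d) : State d :=
  fun j => if J j then c j else y j.

Definition idx_union (J K : IdxSet D) : IdxSet D := fun j => J j || K j.

Definition clamped_equilibrium (O : ODE D d) (K : IdxSet D) (c X : State d) : Prop :=
  InR Rs X /\ (forall j, K j = true -> X j = c j) /\
  (forall j, K j = false -> ode_f O j X = vzero).

Lemma constant_limit (Y Xs : State d) : converges (fun _ => Y) Xs -> Y = Xs.
Proof.
  intro H. apply functional_extensionality_dep. intro j. apply vec_ext. intro k.
  apply Req_of_close. intros eps He. destruct (H eps He) as [T HT].
  apply (HT T). lra.
Qed.

Lemma limit_of_constant_coordinate (X : R -> State d) Xs j k c :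
  converges X Xs -> (forall t, 0 <= t -> X t j k = c) -> c = Xs j k.
Proof.
  intros H Hc. apply Req_of_close. intros eps He. destruct (H eps He) as [T HT].
  rewrite <- (Hc (Rmax T 0)) by apply Rmax_r. apply HT, Rle_ge, Rmax_l.
Qed.

Lemma constant_solution (O : ODE D d) X : InR Rs X -> (forall i, ode_f O i X = vzero) ->
  ode_solution Rs O X (fun _ => X).
Proof.
  intros HX Hf. split; [reflexivity|]. split; [intros; exact HX|]. split.
  - intros t Ht i k. rewrite Hf. apply derivable_pt_lim_const.
  - intros i k eps He. exists 1. split; [lra|]. intros t Ht.
    rewrite Rminus_diag, Rabs_R0. lra.
Qed.

Lemma clamped_coordinate_constant (O : ODE D d) K c X0 X j :
  ode_solution Rs (ode_do O K c) X0 X -> K j = true ->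
  forall t, 0 <= t -> X t j = X0 j.
Proof.
  intros [H0 [_ [Hd Hc]]] HK t Ht. apply vec_ext. intro k.
  assert (Hmvi : Rabs (X t j k - X 0 j k) <= 0 * (t - 0)).
  { apply (mean_value_ineq (fun s => X s j k)
             (fun s => ode_f (ode_do O K c) j (X s) k)); [exact Ht| | |].
    - intros s Hs. apply Hd. lra.
    - rewrite H0. intros eps He. destruct (Hc j k eps He) as [eta [Heta Hnear]].
      exists eta. split; [exact Heta|]. intros s Hs. apply Hnear. lra.
    - intros s _. simpl. rewrite HK. unfold vzero. rewrite Rabs_R0. lra. }
  rewrite H0, Rmult_0_l in Hmvi.
  apply Req_of_close. intros eps He. lra.
Qed.

Lemma loc_lipschitz_continuous {n} (g : State d -> Vec n) x :
  loc_lipschitz Rs n g -> InR Rs x -> forall eps, eps > 0 -> exists eta, eta > 0 /\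
    forall y, InR Rs y -> near eta x y -> forall k, Rabs (g y k - g x k) < eps.
Proof.
  intros Hlip Hx eps He.
  destruct (Hlip x Hx) as [delta [L [Hdl [HL Hl]]]].
  assert (Hq : 0 < eps / (L + 1)) by (apply Rdiv_lt_0_compat; lra).
  exists (Rmin delta (eps / (L + 1))).
  split; [apply Rmin_pos; lra|]. intros y Hy Hnear k.
  assert (Hm1 := Rmin_l delta (eps / (L + 1))).
  assert (Hm2 := Rmin_r delta (eps / (L + 1))).
  apply Rle_lt_trans with (L * Rmin delta (eps / (L + 1))).
  - apply (Hl y x Hy Hx); [| | apply Rlt_le, Rmin_pos; lra|].
    + intros j k'. specialize (Hnear j k'). lra.
    + intros j k'. rewrite Rminus_diag, Rabs_R0. exact Hdl.
    + intros j k'. specialize (Hnear j k'). lra.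
  - apply Rle_lt_trans with (L * (eps / (L + 1))); [apply Rmult_le_compat_l; lra|].
    replace (L * (eps / (L + 1))) with (eps - eps / (L + 1)) by (field; lra). lra.
Qed.

Lemma limit_is_zero (O : ODE D d) X0 X Xs j :
  ode_solution Rs O X0 X -> converges X Xs -> InR Rs Xs ->
  loc_lipschitz Rs _ (ode_f O j) -> ode_f O j Xs = vzero.
Proof.
  intros [_ [HR [Hd _]]] Hcv HXs Hlip. apply vec_ext. intro k.
  apply (derivative_limit_zero (fun t => X t j k) (fun t => ode_f O j (X t) k) (Xs j k)).
  - intros t Ht. exact (Hd t Ht j k).
  - intros eps He. destruct (Hcv eps He) as [T HT]. exists T. intros t Ht. exact (HT t Ht j k).
  - intros eps He.
    destruct (loc_lipschitz_continuous _ Xs Hlip HXs eps He) as [eta [Heta Hc]].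
    destruct (Hcv eta Heta) as [T HT]. exists (Rmax T 0). intros t Ht.
    assert (T <= t /\ 0 <= t) by (generalize (Rmax_l T 0) (Rmax_r T 0); lra).
    apply Hc; [apply HR; lra|]. intros j' k'. apply HT. lra.
Qed.

(* If all parents of i except i itself are clamped and the start X0 is a zero
   of f_i, then coordinate i never moves: f_i seen along the trajectory only
   depends on coordinate i, and is Lipschitz there. *)
Lemma frozen_coordinate (O : ODE D d) K c X0 X i :
  is_ODE Rs O -> ode_solution Rs (ode_do O K c) X0 X -> K i = false ->
  (forall j, ode_pa O i j = true -> j <> i -> K j = true) ->
  ode_f O i X0 = vzero -> forall t, 0 <= t -> X t i = X0 i.
Proof.
  intros HO Hs HKi HK Hf0.
  destruct (proj1 HO i) as [Hdep [_ Hlip]].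
  pose proof Hs as [H0 [HR [Hd Hc]]].
  assert (HX0 : InR Rs X0) by (rewrite <- H0; apply HR; lra).
  pose (Z := fun s => override (singleton i) (X s) X0).
  assert (HZR : forall s, 0 <= s -> InR Rs (Z s)).
  { intros s Hs0 j. unfold Z, override. destruct (singleton i j); [apply HR; exact Hs0| apply HX0]. }
  assert (HZi : forall s, Z s i = X s i)
    by (intro s; unfold Z, override; rewrite singleton_self; reflexivity).
  assert (HZj : forall s j k, i <> j -> Z s j k - X0 j k = 0).
  { intros s j k Hne. unfold Z, override. rewrite (singleton_other _ _ Hne). apply Rminus_diag. }
  assert (HZf : forall s, 0 <= s -> ode_f O i (X s) = ode_f O i (Z s)).
  { intros s Hs0. apply Hdep; [apply HR; exact Hs0| apply HZR; exact Hs0|].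
    intros j Hj. unfold Z, override. destruct (Fin.eq_dec i j) as [<-|Hne].
    - rewrite singleton_self. reflexivity.
    - rewrite (singleton_other _ _ Hne).
      apply (clamped_coordinate_constant O K c X0 X j Hs); [apply HK; congruence| exact Hs0]. }
  destruct (Hlip X0 HX0) as [delta [L [Hdl [HL Hl]]]].
  apply (stays_at_start (d i) (fun s => X s i) (fun s => ode_f O i (X s)) (X0 i) delta L);
    [rewrite H0; reflexivity| exact Hdl| lra| | exact (Hc i)|].
  - intros s Hs0 k. pose proof (Hd s Hs0 i k) as Hk. simpl in Hk. rewrite HKi in Hk. exact Hk.
  - intros s e Hs0 He Hnear Hbound k.
    rewrite HZf by lra.
    replace (ode_f O i (Z s) k) with (ode_f O i (Z s) k - ode_f O i X0 k)
      by (rewrite Hf0; unfold vzero; ring).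
    apply Hl; [apply HZR; lra| exact HX0| | | exact He|].
    + intros j k'. destruct (Fin.eq_dec i j) as [<-|Hne].
      * rewrite HZi. apply Hnear.
      * rewrite HZj, Rabs_R0 by exact Hne. exact Hdl.
    + intros j k'. rewrite Rminus_diag, Rabs_R0. exact Hdl.
    + intros j k'. destruct (Fin.eq_dec i j) as [<-|Hne].
      * rewrite HZi. apply Hbound.
      * rewrite HZj, Rabs_R0 by exact Hne. exact He.
Qed.

Lemma clamped_admissible (O : ODE D d) K c X : observational O -> InR Rs X ->
  (forall j, K j = true -> X j = c j) -> admissible Rs (ode_do O K c) X.
Proof.
  intros Hobs HX HXK. split; [exact HX|]. intro j. simpl.
  rewrite (Hobs j), orb_false_r. intro Hj. rewrite Hj. exact (HXK j Hj).
Qed.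

Lemma equilibrium_is_attractor (O : ODE D d) K c X Xs : observational O ->
  attracts Rs (ode_do O K c) Xs -> clamped_equilibrium O K c X -> X = Xs.
Proof.
  intros Hobs Hatt [HX [HXK HXf]].
  assert (Hzero : forall j, ode_f (ode_do O K c) j X = vzero).
  { intro j. simpl. destruct (K j) eqn:E; [reflexivity| exact (HXf j E)]. }
  destruct (Hatt X (clamped_admissible O K c X Hobs HX HXK)) as [_ Hconv].
  exact (constant_limit _ _ (Hconv _ (constant_solution _ X HX Hzero))).
Qed.

Lemma attractor_is_equilibrium (O : ODE D d) K c Xs : is_ODE Rs O -> observational O ->
  InR_on Rs K c -> InR Rs Xs -> attracts Rs (ode_do O K c) Xs ->
  clamped_equilibrium O K c Xs.
Proof.
  intros HO Hobs Hc HXs Hatt.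
  pose (X0 := override K c Xs).
  assert (HX0K : forall j, K j = true -> X0 j = c j)
    by (intros j Hj; unfold X0, override; rewrite Hj; reflexivity).
  assert (HX0 : InR Rs X0).
  { intro j. unfold X0, override. destruct (K j) eqn:E; [exact (Hc j E)| apply HXs]. }
  destruct (Hatt X0 (clamped_admissible O K c X0 Hobs HX0 HX0K)) as [[X Hsol] Hconv].
  specialize (Hconv X Hsol).
  split; [exact HXs| split].
  - intros j Hj. apply vec_ext. intro k. symmetry.
    apply (limit_of_constant_coordinate X Xs j k (c j k) Hconv). intros t Ht.
    rewrite (clamped_coordinate_constant O K c X0 X j Hsol Hj t Ht), HX0K by exact Hj.
    reflexivity.
  - intros j Hj.
    assert (Hlip : loc_lipschitz Rs _ (ode_f (ode_do O K c) j))
      by (simpl; rewrite Hj; exact (proj2 (proj2 (proj1 HO j)))).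
    pose proof (limit_is_zero _ X0 X Xs j Hsol Hconv HXs Hlip) as Hzero.
    simpl in Hzero. rewrite Hj in Hzero. exact Hzero.
Qed.

(* Start at Y with coordinate i replaced
   by W_i: this coordinate stays frozen, and the solution tends to Y. *)
Lemma equilibrium_coordinate_determined (O : ODE D d) K c i Y W :
  is_ODE Rs O -> observational O -> stable_wrt Rs O K -> K i = false ->
  (forall j, ode_pa O i j = true -> j <> i -> K j = true) ->
  clamped_equilibrium O K c Y -> InR Rs W -> ode_f O i W = vzero ->
  (forall j, ode_pa O i j = true -> j <> i -> W j = Y j) -> W i = Y i.
Proof.
  intros HO Hobs Hst HKi HK HY HW HWf HWY.
  pose proof HY as [HYR [HYK _]].
  assert (Hc : InR_on Rs K c) by (intros j Hj; rewrite <- (HYK j Hj); apply HYR).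
  destruct (Hst c Hc) as [Xs [[_ Hatt] _]].
  rewrite (equilibrium_is_attractor O K c Y Xs Hobs Hatt HY).
  pose (X0 := override (singleton i) W Y).
  assert (HX0R : InR Rs X0).
  { intro j. unfold X0, override. destruct (singleton i j); [apply HW| apply HYR]. }
  assert (HX0i : X0 i = W i) by (unfold X0, override; rewrite singleton_self; reflexivity).
  assert (HX0K : forall j, K j = true -> X0 j = c j).
  { intros j Hj. unfold X0, override. rewrite singleton_other by congruence. exact (HYK j Hj). }
  assert (Hf0 : ode_f O i X0 = vzero).
  { rewrite <- HWf. apply (proj1 (proj1 HO i)); [exact HX0R| exact HW|].
    intros j Hj. unfold X0, override. destruct (Fin.eq_dec i j) as [<-|Hne].
    - rewrite singleton_self. reflexivity.
    - rewrite (singleton_other _ _ Hne). symmetry. apply HWY; [exact Hj| congruence]. }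
  destruct (Hatt X0 (clamped_admissible O K c X0 Hobs HX0R HX0K)) as [[X Hsol] Hconv].
  apply vec_ext. intro k. rewrite <- HX0i.
  apply (limit_of_constant_coordinate X Xs i k (X0 i k) (Hconv X Hsol)). intros t Ht.
  rewrite (frozen_coordinate O K c X0 X i HO Hsol HKi HK Hf0 t Ht). reflexivity.
Qed.

Lemma lee_eq_solution (E1 E2 : LEE D d) X :
  lee_eq Rs E1 E2 -> lee_solution Rs E1 X <-> lee_solution Rs E2 X.
Proof.
  intro Heq. split; intros [HX Hg]; split; try exact HX; intro i.
  - rewrite <- (proj2 (Heq i) X HX). apply Hg.
  - rewrite (proj2 (Heq i) X HX). apply Hg.
Qed.

Lemma lee_eq_do (E1 E2 : LEE D d) K c :
  lee_eq Rs E1 E2 -> lee_eq Rs (lee_do E1 K c) (lee_do E2 K c).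
Proof.
  intros Heq i. split; [intro j | intros X HX]; simpl; destruct (K i);
    solve [reflexivity| apply Heq; assumption].
Qed.

Lemma lee_do_do (E : LEE D d) I xi J c :
  lee_eq Rs (lee_do (lee_do E I xi) J c) (lee_do E (idx_union J I) (override J c xi)).
Proof.
  intro l. unfold idx_union, override.
  split; [intro j | intros X _]; simpl; destruct (J l), (I l); reflexivity.
Qed.

Lemma lee_do_commutes (O : ODE D d) I xi : observational O ->
  lee_eq Rs (lee_do (lee_of_ode O) I xi) (lee_of_ode (ode_do O I xi)).
Proof.
  intros Hobs i. simpl. rewrite (Hobs i), orb_false_r.
  split; [intro j | intros X _]; destruct (I i); reflexivity.
Qed.

Lemma lee_do_solution_iff (O : ODE D d) K c X : observational O ->
  lee_solution Rs (lee_do (lee_of_ode O) K c) X <-> clamped_equilibrium O K c X.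
Proof.
  intro Hobs. unfold lee_solution, clamped_equilibrium. simpl. split.
  - intros [HX Hg]. split; [exact HX| split]; intros j Hj; specialize (Hg j);
      rewrite Hj in Hg; [exact (vsub_zero _ _ Hg)|]. rewrite (Hobs j) in Hg. exact Hg.
  - intros [HX [HK Hf]]. split; [exact HX|]. intro j. destruct (K j) eqn:E.
    + rewrite (HK j E). apply vsub_diag.
    + rewrite (Hobs j). exact (Hf j E).
Qed.

Lemma intervened_lee_solution_iff (O : ODE D d) I xi J c V : observational O ->
  lee_solution Rs (lee_do (lee_of_ode (ode_do O I xi)) J c) V <->
  clamped_equilibrium O (idx_union J I) (override J c xi) V.
Proof.
  intro Hobs.
  rewrite <- (lee_do_solution_iff _ _ _ _ Hobs), <- (lee_eq_solution _ _ _ (lee_do_do _ _ _ _ _)).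
  symmetry. apply lee_eq_solution, lee_eq_do, lee_do_commutes, Hobs.
Qed.

Lemma equilibrium_enlarge (O : ODE D d) K c J X :
  clamped_equilibrium O K c X -> clamped_equilibrium O (idx_union J K) (override J X c) X.
Proof.
  intros [HX [HK Hf]]. unfold idx_union, override.
  split; [exact HX| split]; intros j Hj; destruct (J j) eqn:E; try discriminate.
  - reflexivity.
  - exact (HK j Hj).
  - exact (Hf j Hj).
Qed.

Lemma induced_scm_value (E : LEE D d) Ii M i X : induced_SCM Rs E Ii M -> InR Rs X ->
  exists V, lee_solution Rs (lee_do E (Ii i) X) V /\ scm_h M i X = V i.
Proof.
  intros [Hwit [_ [_ Hval]]] HX.
  destruct (proj2 (proj2 (Hwit i)) X (fun j _ => HX j)) as [V [HV _]].
  exists V. split; [exact HV| exact (Hval i X V HX HV)].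
Qed.

(* Inside I both are the constant xi; outside
   I both values are the i-th coordinate of an equilibrium with the same
   parents of i, hence equal by the uniqueness lemma. *)
Lemma scm_do_commutes (O : ODE D d) I xi Ii Ji M Mdo :
  is_ODE Rs O -> observational O -> struct_stable_witness Rs O Ii ->
  induced_SCM Rs (lee_of_ode O) Ii M ->
  induced_SCM Rs (lee_of_ode (ode_do O I xi)) Ji Mdo ->
  scm_eq Rs (scm_do M I xi) Mdo.
Proof.
  intros HO Hobs HIi HM HMdo.
  pose proof HMdo as [HJi [HMdo_pa _]]. pose proof HM as [_ [HM_pa _]].
  intro i. destruct (HJi i) as [HJpa [HJii _]]. split.
  - intro j. simpl. rewrite HMdo_pa. unfold remove. simpl.
    rewrite (Hobs i), orb_false_r. destruct (I i).
    + destruct (singleton i j); reflexivity.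
    + rewrite HM_pa. unfold remove. simpl. rewrite (Hobs i). reflexivity.
  - intros X HX. simpl.
    destruct (induced_scm_value _ _ _ i X HMdo HX) as [V [HV ->]].
    apply intervened_lee_solution_iff in HV; [|exact Hobs].
    destruct HV as [HVR [HVK HVf]]. unfold idx_union, override in HVK, HVf.
    destruct (I i) eqn:HIi'.
    + rewrite HVK by (rewrite HIi', orb_true_r; reflexivity). rewrite HJii. reflexivity.
    + destruct (induced_scm_value _ _ _ i X HM HX) as [Y [HY ->]].
      apply lee_do_solution_iff in HY; [|exact Hobs].
      destruct (HIi i) as [HIpa [HIii HIst]].
      symmetry. apply (equilibrium_coordinate_determined O (Ii i) X i Y V HO Hobs HIst HIii HIpa HY HVR).
      * apply HVf. rewrite HJii, HIi'. reflexivity.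
      * intros j Hj Hji.
        assert (HjJ : Ji i j = true).
        { apply HJpa; [|exact Hji]. simpl. rewrite (Hobs i), HIi'. exact Hj. }
        rewrite HVK, HjJ by (rewrite HjJ; reflexivity).
        symmetry. apply (proj1 (proj2 HY)), HIpa; assumption.
Qed.

(* A solution X is a clamped equilibrium
   (each X_j is the j-th coordinate of an equilibrium agreeing with X on the
   parents of j), hence the attractor; conversely the attractor is a clamped
   equilibrium and so solves every intervened LEE defining the SCM. *)
Lemma intervened_scm_solutions (O : ODE D d) I xi Ji Mdo Xs :
  is_ODE Rs O -> observational O -> InR_on Rs I xi ->
  induced_SCM Rs (lee_of_ode (ode_do O I xi)) Ji Mdo ->
  InR Rs Xs -> attracts Rs (ode_do O I xi) Xs ->
  forall X, scm_solution Rs Mdo X <-> X = Xs.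
Proof.
  intros HO Hobs Hxi HMdo HXs Hatt X. split.
  - intros [HX Hfix]. apply (equilibrium_is_attractor O I xi X Xs Hobs Hatt).
    split; [exact HX| split]; intros j Hj;
      destruct (induced_scm_value _ _ _ j X HMdo HX) as [V [HV HhV]];
      apply intervened_lee_solution_iff in HV; try exact Hobs;
      destruct HV as [HVR [HVK HVf]]; unfold idx_union, override in HVK, HVf;
      destruct (proj1 HMdo j) as [HJpa [HJjj _]].
    + rewrite Hfix, HhV, HVK by (rewrite Hj, orb_true_r; reflexivity).
      rewrite HJjj. reflexivity.
    + rewrite <- (HVf j) by (rewrite HJjj, Hj; reflexivity).
      apply (proj1 (proj1 HO j)); [exact HX| exact HVR|].
      intros l Hl. destruct (Fin.eq_dec l j) as [->|Hne].
      * rewrite Hfix, HhV. reflexivity.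
      * assert (HlJ : Ji j l = true).
        { apply HJpa; [|exact Hne]. simpl. rewrite (Hobs j), Hj. exact Hl. }
        rewrite HVK, HlJ by (rewrite HlJ; reflexivity). reflexivity.
  - intros ->. split; [exact HXs|]. intro j. symmetry.
    apply (proj2 (proj2 (proj2 HMdo)) j Xs Xs HXs).
    apply intervened_lee_solution_iff; [exact Hobs|].
    apply equilibrium_enlarge, attractor_is_equilibrium; assumption.
Qed.

End InterventionTheory.

Theorem theorem2 (D : nat) (d : Fin.t D -> nat)
  (Rs : forall i : Fin.t D, Vec (d i) -> Prop)
  (O : ODE D d) (I : IdxSet D) (xi : State d)
  (Ii Ji : Fin.t D -> IdxSet D) (M Mdo : SCM D d) :
  is_ODE Rs O -> observational O -> InR_on Rs I xi ->
  struct_stable_witness Rs O Ii ->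
  struct_stable_witness Rs (ode_do O I xi) Ji ->
  induced_SCM Rs (lee_of_ode O) Ii M ->
  induced_SCM Rs (lee_of_ode (ode_do O I xi)) Ji Mdo ->
  (lee_eq Rs (lee_do (lee_of_ode O) I xi) (lee_of_ode (ode_do O I xi)) /\
   scm_eq Rs (scm_do M I xi) Mdo) /\
  (stable_wrt Rs O I ->
   exists Xs, (forall X, scm_solution Rs Mdo X <-> X = Xs) /\
              InR Rs Xs /\ attracts Rs (ode_do O I xi) Xs).
Proof.
  intros HO Hobs Hxi HIi _ HM HMdo. split; [split|].
  - exact (lee_do_commutes O I xi Hobs).
  - exact (scm_do_commutes O I xi Ii Ji M Mdo HO Hobs HIi HM HMdo).
  - intro Hst. destruct (Hst xi Hxi) as [Xs [[HXs Hatt] _]].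
    exists Xs. split; [|split; assumption].
    exact (intervened_scm_solutions O I xi Ji Mdo Xs HO Hobs Hxi HMdo HXs Hatt).
Qed.
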